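(* Assume Setup (S). For every $n\ge 1$ and every $(\alpha_1,\dots,\alpha_{n+1})^T\in\mathbb{C}^{n+1}$ there exists $(\beta_1,\dots,\beta_{n+1})^T\in\mathbb{C}^{n+1}$ such that $R_n(\beta_1,\dots,\beta_{n+1})=\sum_{l=1}^{n+1}\alpha_l\,\chi_{B(l,n)}$.
   Context: Setup (S): Let $\mathfrak{A}=\varinjlim(\mathfrak{A}_n,\phi_n)$ be an AF C$^*$-algebra with $\mathfrak{A}_0=\mathbb{C}$, $\mathfrak{A}_n$ having exactly $n+1$ summands, $\phi_n$ unital injective $*$-homomorphisms with multiplicity matrices $\overline{A}_{n,n+1}\in M_{n+2,n+1}(\mathbb{N})$ ($(i,j)$ entry = multiplicity of summand $j$ of $\mathfrak{A}_n$ in summand $i$ of $\mathfrak{A}_{n+1}$), each of rank $n+1$. The Bratteli diagram has vertices $v(i,n)$, $1\le i\le n+1$, and $(\overline{A}_{n,n+1})_{ij}$ edges from $v(j,n)$ to $v(i,n+1)$. A minimal reduction is a subgraph with the same vertices, obtained by deleting edges only, in which for all $n\ge 0$ each vertex at level $n+1$ receives exactly one edge from level $n$ and each vertex at level $n$ emits at least one edge to level $n+1$. Fix a minimal reduction. Then for each $n\ge 1$ there are unique $1\le r'_n<r_n\le n+1$ and $1\le a_n\le n$ such that $v(r'_n,n)$ and $v(r_n,n)$ are the two vertices joined to $v(a_n,n-1)$, every other vertex of level $n-1$ being joined to exactly one vertex of level $n$; set $r_0=1$. $X_{min}$ is the set of infinite paths $(v(i_n,n))_{n\ge0}$, $i_0=1$,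 in the minimal reduction, with the topology having as clopen basis the nonempty sets $B(i,n)=\{\text{paths with }i_n=i\}$; it is a compact metrizable totally disconnected space. Define the linear map $R_n:\mathbb{C}^{n+1}\to C(X_{min},\mathbb{C})$ by $R_n(\alpha_1,\dots,\alpha_{n+1})=\sum_{l=0}^n\alpha_{l+1}\chi_{B(r_l,l)}$. *)

From mathcomp Require Import all_boot all_order all_algebra.
From mathcomp Require Import reals.
From mathcomp Require Export complex.
Set Implicit Arguments. Unset Strict Implicit. Unset Printing Implicit Defensive.
Import Order.TTheory GRing.Theory Num.Theory.
Local Open Scope ring_scope.

(* Vertices are 0-indexed: v(i,n) with 1 <= i <= n+1 is the ordinal (i-1 : 'I_n.+1).
   A minimal reduction is given by the parent map
     par n : 'I_(n.+2) -> 'I_(n.+1)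
   sending a vertex at level n+1 to the unique vertex at level n it receives
   its (unique) edge from. *)

Section MinRed.
Variable par : forall n : nat, 'I_n.+2 -> 'I_n.+1.

Definition is_path (x : forall n : nat, 'I_n.+1) : Prop :=
  forall n, par (x n.+1) = x n.

Definition Xmin := { x : forall n : nat, 'I_n.+1 | is_path x }.

Definition chiB (R : realType) (i n : nat) (x : Xmin) : R[i] :=
  if (val (proj1_sig x n) == i)%N then 1 else 0.

(* r_n (0-indexed): r_0 = 0, and for n >= 1, r_n is the larger of the two
   vertices at level n that are joined to the same vertex at level n-1,
   i.e. the largest index having a sibling. *)
Definition r (n : nat) : nat :=
  match n with
  | 0 => 0%N
  | m.+1 => \max_(i : 'I_m.+2 | [exists j : 'I_m.+2, (j != i) && (par j == par i)]) val i
  end.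

Definition Rn (R : realType) (n : nat) (beta : 'I_n.+1 -> R[i]) : Xmin -> R[i] :=
  fun x => \sum_(l < n.+1) beta l * chiB R (r l) l x.

End MinRed.

From mathcomp Require Import all_boot all_order all_algebra.
From mathcomp Require Import reals complex.
Import Order.TTheory GRing.Theory Num.Theory.
Local Open Scope ring_scope.

(* The parent map from level m+1 onto level m is a
   surjection from m+2 points onto m+1 points, so exactly one pair of
   siblings c != c' is identified, and we may take c = r_(m+1).  A function h
   on level m+1 equals (h c - h c') chi_B(c, m+1) plus the function obtained
   by replacing c by c', and the latter is constant on the fibres of the
   parent map, hence a function of level m along every path. *)

Lemma surj_injective_off_sibling m (f : 'I_m.+2 -> 'I_m.+1) (c c' : 'I_m.+2) :
  (forall j, j \in codom f) -> c != c' -> f c = f c' ->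
  {in [set~ c] &, injective f}.
Proof.
move=> f_surj ncc' fcc'; apply/imset_injP; rewrite cardsC1 card_ord /=.
apply/eqP/eqP; rewrite eqn_leq; apply/andP; split.
  by apply: leq_trans (max_card _) _; rewrite card_ord.
have /subset_leq_card : [set: 'I_m.+1] \subset f @: [set~ c].
  apply/subsetP => j _; have /codomP [i ->] := f_surj j.
  case: (eqVneq i c) => [->|nic]; last by rewrite imset_f ?inE.
  by rewrite fcc' imset_f // !inE eq_sym.
by rewrite cardsT card_ord.
Qed.

Lemma factor_fiber_constant (aT rT : finType) (T : Type) (f : aT -> rT)
    (h : aT -> T) :
  (forall j, j \in codom f) -> (forall a b, f a = f b -> h a = h b) ->
  exists g : rT -> T, forall a, h a = g (f a).
Proof.
move=> f_surj h_fib; exists (fun j => h (iinv (f_surj j))) => a.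
by apply: h_fib; rewrite f_iinv.
Qed.

Section Span.
Variable par : forall n : nat, 'I_n.+2 -> 'I_n.+1.
Variable R : realType.

Lemma sum_chiB m (f : 'I_m.+1 -> R[i]) (x : Xmin par) :
  \sum_(i < m.+1) f i * chiB R i m x = f (proj1_sig x m).
Proof.
rewrite (bigD1 (proj1_sig x m)) //= big1 ?addr0; first by rewrite /chiB eqxx mulr1.
move=> i /negbTE ne; rewrite /chiB.
by rewrite -[_ == _]/(proj1_sig x m == i) eq_sym ne mulr0.
Qed.

Hypothesis par_surj : forall n (j : 'I_n.+1), exists i : 'I_n.+2, par n i = j.

Lemma r_sibling m : exists c c' : 'I_m.+2,
  [/\ c != c', par m c = par m c' & val c = r par m.+1].
Proof.
have /injectivePn [a [b nab eab]] : ~~ injectiveb (par m).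
  apply/injectiveP => par_inj.
  by have := leq_card _ par_inj; rewrite !card_ord ltnn.
pose has_sibling i := [exists j : 'I_m.+2, (j != i) && (par m j == par m i)].
have /card_gt0P nonempty : exists i, i \in has_sibling.
  by exists a; rewrite unfold_in; apply/existsP; exists b; rewrite eq_sym nab eab /=.
have [c] := eq_bigmax_cond (fun i : 'I_m.+2 => val i) nonempty.
rewrite unfold_in => /existsP [c' /andP [ncc' /eqP pcc']] rc.
by exists c, c'; rewrite eq_sym.
Qed.

Definition spanned m (h : 'I_m.+1 -> R[i]) : Prop :=
  exists beta : nat -> R[i], forall x : Xmin par,
    h (proj1_sig x m) = \sum_(l < m.+1) beta l * chiB R (r par l) l x.

Lemma spanned_all m (h : 'I_m.+1 -> R[i]) : spanned m h.
Proof.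
elim: m h => [|m IH] h.
  exists (fun=> h ord0) => x; rewrite big_ord1 /chiB /=.
  by case: (proj1_sig x 0) => [[|k] //= ?]; rewrite mulr1; congr h; apply: val_inj.
have [c [c' [ncc' pcc' rc]]] := r_sibling m.
have par_surj_m j : j \in codom (par m) by have [i <-] := par_surj m j; apply: codom_f.
have par_inj := @surj_injective_off_sibling _ _ _ _ par_surj_m ncc' pcc'.
pose fold y := if y == c then c' else y.
have fold_neq y : fold y != c by rewrite /fold; case: (eqVneq y c) => // _; rewrite eq_sym.
have par_fold y : par m (fold y) = par m y by rewrite /fold; case: (eqVneq y c) => [->|].
have [g hg] : exists g, forall y, h (fold y) = g (par m y).
  apply: factor_fiber_constant => // a b pab; congr h.
  by apply: par_inj; rewrite ?inE ?fold_neq // !par_fold.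
have [beta hbeta] := IH g.
exists (fun l => if l == m.+1 then h c - h c' else beta l) => x.
rewrite big_ord_recr /= eqxx.
under eq_bigr => l _ do rewrite (ltn_eqF (ltn_ord l)).
move: rc => /= rc.
rewrite -hbeta -(proj2_sig x m) -hg -rc /chiB /fold.
rewrite -[val _ == val c]/(proj1_sig x m.+1 == c).
by case: eqP => [->|]; rewrite ?mulr1 ?mulr0 ?addr0 // addrC subrK.
Qed.

End Span.

Theorem lemma4p1
  (R : realType)
  (* multiplicity matrices of the Bratteli diagram: A n = \bar A_{n,n+1} *)
  (A : forall n : nat, 'M[nat]_(n.+2, n.+1))
  (* each has rank n+1 *)
  (hrank : forall n : nat, \rank (map_mx (fun k : nat => k%:R : rat) (A n)) = n.+1)
  (* sizes of the matrix-algebra summands: phi_n unital, A_0 = C *)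
  (d : forall n : nat, 'I_n.+1 -> nat)
  (hd0 : forall i, d 0%N i = 1%N)
  (hdpos : forall n i, (0 < d n i)%N)
  (hunital : forall n (i : 'I_n.+2), d n.+1 i = (\sum_(j < n.+1) A n i j * d n j)%N)
  (* phi_n injective: every summand of A_n embeds somewhere *)
  (hinj : forall n (j : 'I_n.+1), exists i : 'I_n.+2, (0 < A n i j)%N)
  (* a minimal reduction, given by its parent maps *)
  (par : forall n : nat, 'I_n.+2 -> 'I_n.+1)
  (hsub : forall n (i : 'I_n.+2), (0 < A n i (par n i))%N)
  (hemit : forall n (j : 'I_n.+1), exists i : 'I_n.+2, par n i = j)
  (n : nat) (hn : (1 <= n)%N) (alpha : 'I_n.+1 -> R[i]) :
  exists beta : 'I_n.+1 -> R[i],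
    forall x : Xmin par,
      @Rn par R n beta x = \sum_(l < n.+1) alpha l * @chiB par R l n x.
Proof.
have [beta hbeta] := @spanned_all par R hemit n alpha.
by exists (fun l : 'I_n.+1 => beta l) => x; rewrite /Rn sum_chiB hbeta.
Qed.
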